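(* Let $n\in\mathbb{Z}$ and let $d:\mathcal{A}\to A$ be an $n$-covariant derivation. Then there exists a function $\beta:\mathbb{Z}\to\mathbb{C}$ with convergent increments, unique if $n\ne0$ and unique modulo an additive constant if $n=0$, such that $d(a)=[U^n\beta(\mathbb{K}),a]$ for all $a\in\mathcal{A}$.
   Context: Let $\{E_k\}$ be the canonical basis of $\ell^2(\mathbb{Z})$, $UE_k=E_{k+1}$, $\mathbb{K}E_k=kE_k$, $a(\mathbb{K})E_k=a(k)E_k$. $A$ is the C$^*$-algebra generated by $U$ and all $a(\mathbb{K})$ with $a$ having finite limits at $\pm\infty$; $\mathcal{A}$ is the algebra of finite sums $\sum_nU^na_n(\mathbb{K})$ with each $a_n$ eventually constant (constant on $k\ge k_0$ and on $k\le-k_0$ for some $k_0$). For $\varphi\in[0,2\pi)$ the rotation automorphism is $\rho_\varphi(a)=e^{i\varphi\mathbb{K}}ae^{-i\varphi\mathbb{K}}$ (it preserves $A$ and $\mathcal{A}$ and fixes diagonal operators). A derivation $d:\mathcal{A}\to A$ (linear, Leibniz) is $n$-covariant if $d(\rho_\varphi(a))=e^{-in\varphi}\rho_\varphi(d(a))$ for all $a\in\mathcal{A}$, $\varphi$. A function $\beta$ has convergent increments if $k\mapsto\beta(k)-\beta(k-1)$ has finite limits as $k\to\pm\infty$. *)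

From HB Require Import structures.
From mathcomp Require Import all_boot all_order all_algebra.
From mathcomp Require Import boolp classical_sets reals trigo Rstruct.
From mathcomp.real_closed Require Import complex.
Set Implicit Arguments. Unset Strict Implicit. Unset Printing Implicit Defensive.
Import Order.TTheory GRing.Theory Num.Theory.
Local Open Scope ring_scope.
Local Open Scope complex_scope.

Notation Rr := Rdefinitions.R.
Notation C := (Rr[i]).

(** Operators on l^2(Z) are represented by their matrices in the canonical
    basis {E_k}: M i j = < E_i , M E_j >. *)
Definition mat := int -> int -> C.

Definition addm (M N : mat) : mat := fun i j => M i j + N i j.
Definition oppm (M : mat) : mat := fun i j => - M i j.
Definition subm (M N : mat) : mat := fun i j => M i j - N i j.
Definition scalem (c : C) (M : mat) : mat := fun i j => c * M i j.

Definition zwin (N : nat) : seq int :=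
  [seq (m%:Z - N%:Z) | m <- iota 0 (N.*2).+1].

(** Matrix product: (M N)_{ij} = sum_k M_{ik} N_{kj}, defined as the eventual
    value of the symmetric partial sums (these are eventually constant whenever
    one factor is banded, which is the only case used below). *)
Definition mulm (M N : mat) : mat := fun i j =>
  xget 0 (fun c : C => exists N0 : nat, forall n : nat, (N0 <= n)%N ->
            \sum_(k <- zwin n) M i k * N k j = c).

Definition commm (M N : mat) : mat := subm (mulm M N) (mulm N M).

(** U^n a(K) : E_j |-> a(j) E_{j+n} *)
Definition shiftdiag (n : int) (a : int -> C) : mat :=
  fun i j => if i == j + n then a j else 0.

Definition polym (s : seq (int * (int -> C))) : mat :=
  fun i j => \sum_(p <- s) shiftdiag p.1 p.2 i j.

Definition has_limits (a : int -> C) : Prop :=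
  exists lp lm : C, forall eps : Rr, 0 < eps -> exists N : int,
    forall k : int, (N <= k -> `|a k - lp| <= eps%:C) /\
                    (k <= - N -> `|a k - lm| <= eps%:C).

Definition eventually_const (a : int -> C) : Prop :=
  exists k0 : int, forall k : int, (k0 <= k -> a k = a k0) /\
                                   (k <= - k0 -> a k = a (- k0)).

Definition in_calA (M : mat) : Prop :=
  exists s : seq (int * (int -> C)),
    all (fun p => `[< eventually_const p.2 >]) s /\ M = polym s.

Definition in_polyA (M : mat) : Prop :=
  exists s : seq (int * (int -> C)),
    all (fun p => `[< has_limits p.2 >]) s /\ M = polym s.

(** ||M|| <= c  (operator norm on l^2(Z)), tested on finitely supported
    vectors x (supported on s) and finite sets t of output coordinates. *)
Definition norm_le (M : mat) (c : Rr) : Prop :=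
  forall (s t : seq int) (x : int -> C), uniq s -> uniq t ->
    \sum_(i <- t) `| \sum_(j <- s) M i j * x j | ^+ 2
      <= (c ^+ 2)%:C * \sum_(j <- s) `| x j | ^+ 2.

Definition in_A (M : mat) : Prop :=
  forall eps : Rr, 0 < eps -> exists P : mat, in_polyA P /\ norm_le (subm M P) eps.

Definition expi (phi : Rr) : C := Complex (cos phi) (sin phi).

(** rho_phi(M) = e^{i phi K} M e^{-i phi K} : entries e^{i phi (i - j)} M_{ij} *)
Definition rho (phi : Rr) (M : mat) : mat :=
  fun i j => expi phi ^ (i - j) * M i j.

Definition is_derivation (d : mat -> mat) : Prop :=
  (forall a, in_calA a -> in_A (d a)) /\
  (forall a b, in_calA a -> in_calA b -> d (addm a b) = addm (d a) (d b)) /\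
  (forall (c : C) a, in_calA a -> d (scalem c a) = scalem c (d a)) /\
  (forall a b, in_calA a -> in_calA b ->
     d (mulm a b) = addm (mulm (d a) b) (mulm a (d b))).

Definition n_covariant (n : int) (d : mat -> mat) : Prop :=
  forall a, in_calA a -> forall phi : Rr, 0 <= phi < 2 * pi ->
    d (rho phi a) = scalem (expi phi ^ (- n)) (rho phi (d a)).

Definition conv_increments (beta : int -> C) : Prop :=
  has_limits (fun k => beta k - beta (k - 1)).

(* Rotation covariance forces d(U^m a(K)) onto the (n+m)-th diagonal, so d is
   described by coefficient functions.  The Leibniz rule applied to
   a(K) delta_j(K) = a(j) delta_j(K) and to U delta_j(K) = delta_(j+1)(K) U shows
   that d(a(K)) has coefficients beta(j) (a(j) - a(j+n)) and d(U) has coefficients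
   beta(j+1) - beta(j), where beta(j) is the coefficient of d(delta_j(K)) when
   n <> 0 and a primitive of the coefficients of d(U) when n = 0; the Leibniz rule
   then propagates this to every U^m a(K), which gives d = [U^n beta(K), _].
   The increments of beta form the diagonal of d(U), an element of A: since the
   operator norm bounds matrix entries, this diagonal is a uniform limit of
   functions with limits at +-oo, hence has limits by completeness of C.
   Conversely [U^n beta(K), _] recovers beta from delta_j(K) when n <> 0 and its
   increments from U when n = 0. *)

From HB Require Import structures.
From mathcomp Require Import all_boot all_order all_algebra.
From mathcomp Require Import boolp classical_sets reals trigo Rstruct.
From mathcomp.real_closed Require Import complex.
From mathcomp Require Import zify ring lra.
Set Implicit Arguments. Unset Strict Implicit. Unset Printing Implicit Defensive.
Import Order.TTheory GRing.Theory Num.Theory.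
Local Open Scope ring_scope.
Local Open Scope complex_scope.

Lemma mem_zwin (x : int) (N : nat) : (`|x| <= N)%N -> x \in zwin N.
Proof. by move=> le_xN; apply/mapP; exists (absz (x + N%:Z)); rewrite ?mem_iota; lia. Qed.

Lemma zwin_uniq (N : nat) : uniq (zwin N).
Proof. by rewrite map_inj_uniq ?iota_uniq // => a b /=; lia. Qed.

Lemma mulm_single (M N : mat) (i j k0 : int) :
  (forall k, k != k0 -> M i k * N k j = 0) -> mulm M N i j = M i k0 * N k0 j.
Proof.
move=> vanish; have sum_zwin p : (absz k0 <= p)%N ->
    \sum_(k <- zwin p) M i k * N k j = M i k0 * N k0 j.
  move=> le_k0p; rewrite (bigD1_seq k0) ?zwin_uniq ?mem_zwin //=.
  by rewrite big1 ?addr0 // => k; apply: vanish.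
rewrite /mulm; case: xgetP => [c _ [N0 sumN0]|]; last first.
  by move=> /(_ (M i k0 * N k0 j)); case; exists (absz k0).
by rewrite -(sumN0 (maxn N0 (absz k0))) ?leq_maxl // sum_zwin ?leq_maxr.
Qed.

Lemma shiftdiag_diag (m : int) (f : int -> C) (j : int) : shiftdiag m f (j + m) j = f j.
Proof. by rewrite /shiftdiag eqxx. Qed.

Lemma mulm_shiftdiagr (M : mat) (m : int) (f : int -> C) (i j : int) :
  mulm M (shiftdiag m f) i j = M i (j + m) * f j.
Proof.
rewrite (@mulm_single _ _ _ _ (j + m)) ?shiftdiag_diag // => k.
by rewrite /shiftdiag => /negbTE ->; rewrite mulr0.
Qed.

Lemma mulm_shiftdiagl (M : mat) (m : int) (f : int -> C) (i j : int) :
  mulm (shiftdiag m f) M i j = f (i - m) * M (i - m) j.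
Proof.
rewrite (@mulm_single _ _ _ _ (i - m)) /shiftdiag ?subrK ?eqxx // => k.
by case: (eqVneq i (k + m)) => [->|_]; rewrite ?addrK ?eqxx ?mul0r.
Qed.

Lemma mulm_shiftdiag (m l : int) (f g : int -> C) :
  mulm (shiftdiag m f) (shiftdiag l g) =
  shiftdiag (m + l) (fun j => f (j + l) * g j).
Proof.
apply/funext=> i; apply/funext=> j.
rewrite mulm_shiftdiagr /shiftdiag (addrC m l) addrA.
by case: ifP; rewrite ?mul0r.
Qed.

Lemma commm_shiftdiag (n m : int) (b a : int -> C) :
  commm (shiftdiag n b) (shiftdiag m a) =
  shiftdiag (n + m) (fun k => b (k + m) * a k - a (k + n) * b k).
Proof.
rewrite /commm !mulm_shiftdiag (addrC m n); apply/funext=> i; apply/funext=> k.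
by rewrite /subm /shiftdiag; case: ifP; rewrite ?subrr.
Qed.

Lemma commm_addmr (A B : mat) (n : int) (b : int -> C) :
  commm (shiftdiag n b) (addm A B) =
  addm (commm (shiftdiag n b) A) (commm (shiftdiag n b) B).
Proof.
apply/funext=> i; apply/funext=> j.
rewrite /commm /subm /addm !mulm_shiftdiagl !mulm_shiftdiagr; ring.
Qed.

Lemma scalem_shiftdiag (c : C) (m : int) (f : int -> C) :
  scalem c (shiftdiag m f) = shiftdiag m (fun k => c * f k).
Proof.
apply/funext=> i; apply/funext=> j.
by rewrite /scalem /shiftdiag; case: ifP; rewrite ?mulr0.
Qed.

Lemma rho_shiftdiag (phi : Rr) (m : int) (f : int -> C) :
  rho phi (shiftdiag m f) = scalem (expi phi ^ m) (shiftdiag m f).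
Proof.
apply/funext=> i; apply/funext=> j; rewrite /rho /scalem /shiftdiag.
by case: eqP => [->|_]; rewrite ?(addrC j m) ?addrK ?mulr0.
Qed.

Lemma in_calA_shiftdiag (m : int) (f : int -> C) :
  eventually_const f -> in_calA (shiftdiag m f).
Proof.
move=> f_ec; exists [:: (m, f)]; split; first by rewrite /= andbT; apply/asboolP.
by apply/funext=> i; apply/funext=> j; rewrite /polym big_seq1.
Qed.

Lemma expiD (x y : Rr) : expi (x + y) = expi x * expi y.
Proof. by rewrite /expi trigo.cosD trigo.sinD /=; congr Complex; ring. Qed.

Lemma expi0 : expi 0 = 1.
Proof. by rewrite /expi cos0 sin0. Qed.

Lemma expi_neq0 (x : Rr) : expi x != 0.
Proof.
apply/eqP=> x0; have := expiD x (- x).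
by rewrite subrr expi0 x0 mul0r => /eqP; rewrite oner_eq0.
Qed.

Lemma expi_natmul (x : Rr) (p : nat) : expi x ^+ p = expi (p%:R * x).
Proof.
elim: p => [|p IHp]; first by rewrite mul0r expi0.
by rewrite exprS IHp -expiD mulrSr mulrDl mul1r addrC.
Qed.

Lemma expi_pi : expi pi = -1.
Proof. by rewrite /expi cospi sinpi; apply/eqP; rewrite eq_complex /= oppr0 !eqxx. Qed.

Lemma exists_expi_exprz_neq1 (k : int) : k != 0 ->
  exists2 phi : Rr, 0 <= phi < 2 * pi & expi phi ^ k != 1.
Proof.
have half_turn (p : nat) : (0 < p)%N ->
    exists2 phi : Rr, 0 <= phi < 2 * pi & expi phi ^+ p = -1.
  move=> p_gt0; have p_ge1 : 1 <= p%:R :> Rr by rewrite ler1n.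
  have pi_gt0 := pi_gt0 Rr; exists (pi / p%:R).
    by rewrite divr_ge0 ?ler0n ?ltW //= ltr_pdivrMr ?ltr0n //; nra.
  by rewrite expi_natmul mulrC divfK ?expi_pi // pnatr_eq0 -lt0n.
have N1_neq1 : (-1 : C) != 1 by rewrite (lt_eqF (lt_trans (ltrN10 C) ltr01)).
case: k => q k_neq0.
  have [|phi phi_range half] := half_turn q; first by rewrite lt0n.
  by exists phi; rewrite // -exprnP half.
have [//|phi phi_range half] := half_turn q.+1.
by exists phi; rewrite // NegzE -exprnN half invrN1.
Qed.

Lemma rho_eigen_support (D : mat) (p : int) :
  (forall phi : Rr, 0 <= phi < 2 * pi -> rho phi D = scalem (expi phi ^ p) D) ->
  forall i j, i - j != p -> D i j = 0.
Proof.
move=> eigen i j ij_neq_p; have : i - j - p != 0 by rewrite subr_eq0.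
case/exists_expi_exprz_neq1=> phi phi_range; apply: contraNeq => Dij_neq0.
have := congr1 (fun M => M i j) (eigen phi phi_range).
rewrite /rho /scalem => /(mulIf Dij_neq0) eq_pow.
by rewrite expfzDr ?expi_neq0 // eq_pow -expfzDr ?expi_neq0 // subrr expr0z.
Qed.

Lemma R_cauchy_cvg (u : nat -> Rr) :
  (forall e : Rr, 0 < e -> exists N : nat,
     forall p q, (N <= p)%N -> (N <= q)%N -> `|u p - u q| <= e) ->
  exists l, forall e : Rr, 0 < e -> exists N : nat,
     forall p, (N <= p)%N -> `|u p - l| <= e.
Proof.
move=> u_cauchy; have [l u_cvg] : {l | Rseries.Un_cv u l}.
  apply: Rcomplete.R_complete => e /RltP; rewrite RealsE => e_gt0.
  have [N HN] := u_cauchy (e / 2) ltac:(lra).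
  exists N => p q /ssrnat.leP le_Np /ssrnat.leP le_Nq; apply/RltP; rewrite RealsE.
  by apply: le_lt_trans (HN p q le_Np le_Nq) _; lra.
exists l => e e_gt0; have /RltP := e_gt0; rewrite -RealsE => /u_cvg[N HN].
by exists N => p /ssrnat.leP /HN /RltP; rewrite RealsE => /ltW.
Qed.

Lemma normc_ge_Im (x : C) : `|complex.Im x|%:C <= `|x|.
Proof.
rewrite -normrN -ReiNIm (le_trans (normc_ge_Re _)) //.
by rewrite normrM complexiE normCi mulr1.
Qed.

Lemma normc_le (x : C) (e : Rr) : 0 <= e ->
  (`|x| <= e%:C) = (complex.Re x ^+ 2 + complex.Im x ^+ 2 <= e ^+ 2).
Proof.
move=> e_ge0; have x_nneg : `|x| \in Num.nneg by rewrite nnegrE normr_ge0.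
have e_nneg : e%:C \in Num.nneg by rewrite nnegrE ler0c.
by rewrite -(ler_pXn2r (ltn0Sn 1) x_nneg e_nneg) -add_Re2_Im2 -rmorphXn lecR.
Qed.

Definition cvgC (u : nat -> C) (l : C) : Prop :=
  forall e : Rr, 0 < e -> exists N : nat, forall p, (N <= p)%N -> `|u p - l| <= e%:C.

Lemma cauchyC_cvg (u : nat -> C) :
  (forall e : Rr, 0 < e -> exists N : nat,
     forall p q, (N <= p)%N -> (N <= q)%N -> `|u p - u q| <= e%:C) ->
  exists l, cvgC u l.
Proof.
move=> u_cauchy.
have part_cvg (P : C -> Rr) : (forall z, `|P z|%:C <= `|z|) -> {morph P : x y / x - y} ->
    exists l, forall e : Rr, 0 < e -> exists N : nat,
      forall p, (N <= p)%N -> `|P (u p) - l| <= e.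
  move=> P_le PB; apply: R_cauchy_cvg => e /u_cauchy[N HN].
  by exists N => p q le_Np le_Nq; rewrite -PB -lecR (le_trans (P_le _)) ?HN.
have [a Re_cvg] := part_cvg _ (@normc_ge_Re _) (raddfB _).
have [b Im_cvg] := part_cvg _ normc_ge_Im (raddfB _).
exists (Complex a b) => e e_gt0.
have [Na HNa] := Re_cvg (e / 2) ltac:(lra).
have [Nb HNb] := Im_cvg (e / 2) ltac:(lra).
exists (maxn Na Nb) => p; rewrite geq_max => /andP[/HNa Re_near /HNb Im_near].
move: Re_near Im_near; rewrite normc_le ?(ltW e_gt0) // !raddfB /= !ler_norml.
by move=> /andP[? ?] /andP[? ?]; nra.
Qed.

Lemma cvgC_uniform_limit (u : nat -> C) :
  (forall e : Rr, 0 < e -> exists h l, cvgC h l /\ forall p, `|u p - h p| <= e%:C) ->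
  exists l, cvgC u l.
Proof.
move=> approx; apply: cauchyC_cvg => e e_gt0.
have [h [l [/(_ (e / 4) ltac:(lra))[N h_cvg] u_near_h]]] := approx (e / 4) ltac:(lra).
have u_near_l p : (N <= p)%N -> `|u p - l| <= (e / 2)%:C.
  move=> le_Np; apply: le_trans (ler_distD (h p) _ _) _.
  by rewrite (le_trans (lerD (u_near_h p) (h_cvg p le_Np))) // -rmorphD lecR; lra.
exists N => p q le_Np le_Nq; apply: le_trans (ler_distD l _ _) _.
rewrite [`|l - _|]distrC (le_trans (lerD (u_near_l p le_Np) (u_near_l q le_Nq))) //.
by rewrite -rmorphD lecR; lra.
Qed.

Lemma has_limitsP (g : int -> C) : has_limits g <->
  exists lp lm, cvgC (fun p => g p) lp /\ cvgC (fun p => g (- p%:Z)) lm.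
Proof.
split=> [[lp [lm g_lim]]|[lp [lm [cvgp cvgm]]]].
  exists lp, lm; split=> e /g_lim[N HN]; exists (absz N) => p le_Np.
    by apply: (HN p).1; lia.
  by apply: (HN _).2; lia.
exists lp, lm => e e_gt0.
have [Np HNp] := cvgp e e_gt0; have [Nm HNm] := cvgm e e_gt0.
exists (Np + Nm)%:Z => k; split=> le_k.
  have -> : k = absz k by lia.
  by apply: HNp; lia.
have -> : k = - (absz k)%:Z by lia.
by apply: HNm; lia.
Qed.

Lemma has_limits_uniform_limit (g : int -> C) :
  (forall e : Rr, 0 < e -> exists h, has_limits h /\ forall k, `|g k - h k| <= e%:C) ->
  has_limits g.
Proof.
move=> approx; apply/has_limitsP.
have [lp cvgp] : exists lp, cvgC (fun p => g p) lp.
  apply: cvgC_uniform_limit => e /approx[h [/has_limitsP[lp [_ [cvgp _]]] near]].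
  by exists (fun p => h p), lp.
have [lm cvgm] : exists lm, cvgC (fun p => g (- p%:Z)) lm.
  apply: cvgC_uniform_limit => e /approx[h [/has_limitsP[_ [lm [_ cvgm]]] near]].
  by exists (fun p => h (- p%:Z)), lm.
by exists lp, lm.
Qed.

Lemma has_limits_const (c : C) : has_limits (fun=> c).
Proof.
by exists c, c => e e_gt0; exists 0 => k; rewrite subrr normr0 ler0c (ltW e_gt0).
Qed.

Lemma has_limits_add (f g : int -> C) :
  has_limits f -> has_limits g -> has_limits (fun k => f k + g k).
Proof.
move=> [lpf [lmf f_lim]] [lpg [lmg g_lim]]; exists (lpf + lpg), (lmf + lmg) => e e_gt0.
have [Nf HNf] := f_lim (e / 2) ltac:(lra); have [Ng HNg] := g_lim (e / 2) ltac:(lra).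
have near_sum x y u v : `|x - u| <= (e / 2)%:C -> `|y - v| <= (e / 2)%:C ->
    `|x + y - (u + v)| <= e%:C.
  move=> near_x near_y; rewrite opprD addrACA (le_trans (ler_normD _ _)) //.
  by rewrite (le_trans (lerD near_x near_y)) // -rmorphD lecR; lra.
exists (absz Nf + absz Ng)%:Z => k; split=> le_k; apply: near_sum.
- by apply: (HNf k).1; lia.
- by apply: (HNg k).1; lia.
- by apply: (HNf k).2; lia.
- by apply: (HNg k).2; lia.
Qed.

Lemma has_limits_shift (f : int -> C) (c : int) :
  has_limits f -> has_limits (fun k => f (k + c)).
Proof.
move=> [lp [lm f_lim]]; exists lp, lm => e /f_lim[N HN].
by exists (absz N + absz c)%:Z => k; split=> le_k; [apply: (HN _).1 | apply: (HN _).2]; lia.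
Qed.

Lemma has_limits_polym_diag (s : seq (int * (int -> C))) (m : int) :
  all (fun p => `[< has_limits p.2 >]) s -> has_limits (fun k => polym s (k + m) k).
Proof.
elim: s => [_|[l a] s IHs /= /andP[/asboolP a_lim /IHs s_lim]].
  by rewrite /polym; under eq_fun do rewrite big_nil; apply: has_limits_const.
rewrite /polym; under eq_fun do rewrite big_cons /= /shiftdiag (inj_eq (addrI _)).
by apply: has_limits_add s_lim; case: eqP => _; [apply: a_lim | apply: has_limits_const].
Qed.

Lemma norm_le_entry (M : mat) (c : Rr) : 0 <= c -> norm_le M c ->
  forall i j, `|M i j| <= c%:C.
Proof.
move=> c_ge0 M_le i j; have := M_le [:: j] [:: i] (fun=> 1) erefl erefl.
rewrite !big_seq1 mulr1 normr1 expr1n mulr1 rmorphXn /=.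
by rewrite ler_pXn2r // ?nnegrE ?ler0c.
Qed.

Lemma in_A_shiftdiag_has_limits (m : int) (g : int -> C) :
  in_A (shiftdiag m g) -> has_limits g.
Proof.
move=> g_in_A; apply: has_limits_uniform_limit => e e_gt0.
have [_ [[s [s_lim ->]] near]] := g_in_A e e_gt0.
exists (fun k => polym s (k + m) k); split; first exact: has_limits_polym_diag.
by move=> k; have := norm_le_entry (ltW e_gt0) near (k + m) k; rewrite /subm shiftdiag_diag.
Qed.

Definition delta (j : int) : int -> C := fun k => (k == j)%:R.

Lemma eventually_const_cst (c : C) : eventually_const (fun=> c).
Proof. by exists 0. Qed.

Lemma eventually_const_delta (j : int) : eventually_const (delta j).
Proof.
exists (absz j).+1%:Z => k; rewrite /delta.
by split=> le_k; congr _%:R; apply/eqP/eqP; lia.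
Qed.

Lemma int_ind_succ (P : int -> Prop) :
  P 0 -> (forall m, P m <-> P (m + 1)) -> forall m, P m.
Proof.
move=> P0 PS; elim/int_ind => [//|k /PS|k Pk]; first by rewrite intS addrC.
by apply/PS; have -> : - k.+1%:Z + 1 = - k%:Z by lia.
Qed.

Definition primitive (g : int -> C) (k : int) : C :=
  match k with
  | Posz p => \sum_(i < p) g i
  | Negz p => - \sum_(i < p.+1) g (- i.+1%:Z)
  end.

Lemma primitiveS (g : int -> C) (k : int) : primitive g (k + 1) = primitive g k + g k.
Proof.
case: k => [p|[|p]]; first by rewrite addrC -intS /= big_ord_recr.
  have -> : Negz 0 + 1 = 0 by [].
  by rewrite /= big_ord_recr big_ord0 /= add0r addNr big_ord0.
have -> : Negz p.+1 + 1 = Negz p by rewrite !NegzE; lia.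
by rewrite /= (big_ord_recr p.+1) /= -NegzE opprD addrNK.
Qed.

Lemma commm_shiftdiag_calA_inj (n : int) (b b' : int -> C) :
  (forall a, in_calA a -> commm (shiftdiag n b') a = commm (shiftdiag n b) a) ->
  if n != 0 then b' = b else exists c, forall k, b' k = b k + c.
Proof.
move=> same; have same_sd m a k : eventually_const a ->
    b' (k + m) * a k - a (k + n) * b' k = b (k + m) * a k - a (k + n) * b k.
  move=> a_ec; have := same _ (in_calA_shiftdiag m a_ec).
  rewrite !commm_shiftdiag => /(congr1 (fun M => M (k + (n + m)) k)).
  by rewrite !shiftdiag_diag.
have [_|n_neq0] /= := eqVneq n 0; last first.
  apply/funext=> j; have := same_sd 0 _ j (eventually_const_delta j); rewrite /delta.
  have -> : (j + n == j) = false by apply/negbTE; rewrite -subr_eq0 addrAC subrr add0r.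
  by rewrite addr0 eqxx !mulr1 !mul0r !subr0.
have step k : b' (k + 1) - b (k + 1) = b' k - b k.
  have := same_sd 1 _ k (eventually_const_cst 1); rewrite !mulr1 !mul1r => incr.
  apply/eqP; rewrite -subr_eq0.
  have -> : b' (k + 1) - b (k + 1) - (b' k - b k) =
            (b' (k + 1) - b' k) - (b (k + 1) - b k) by ring.
  by rewrite incr subrr.
suff const k : b' k - b k = b' 0 - b 0.
  by exists (b' 0 - b 0) => k; rewrite -(const k) addrC subrK.
by elim/int_ind_succ: k => // m; rewrite step.
Qed.

Section CovariantDerivation.

Variables (n : int) (d : mat -> mat).
Hypotheses (d_der : is_derivation d) (d_cov : n_covariant n d).

Let d_in_A a : in_calA a -> in_A (d a) := d_der.1 a.
Let d_add a b : in_calA a -> in_calA b -> d (addm a b) = addm (d a) (d b) :=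
  d_der.2.1 a b.
Let d_scale (c : C) a : in_calA a -> d (scalem c a) = scalem c (d a) :=
  d_der.2.2.1 c a.
Let d_mul a b : in_calA a -> in_calA b ->
  d (mulm a b) = addm (mulm (d a) b) (mulm a (d b)) := d_der.2.2.2 a b.

Definition dcoef (m : int) (f : int -> C) (j : int) : C :=
  d (shiftdiag m f) (j + (n + m)) j.

Lemma d_shiftdiag (m : int) (f : int -> C) :
  eventually_const f -> d (shiftdiag m f) = shiftdiag (n + m) (dcoef m f).
Proof.
move=> f_ec; have f_calA := in_calA_shiftdiag m f_ec.
apply/funext=> i; apply/funext=> j.
have [->|ij] := eqVneq i (j + (n + m)); first by rewrite shiftdiag_diag.
rewrite /shiftdiag (negbTE ij); apply: (@rho_eigen_support _ (n + m)); last first.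
  by rewrite subr_eq addrC.
move=> phi phi_range; apply/funext=> i'; apply/funext=> j'.
have := congr1 (fun M => M i' j') (d_cov f_calA phi_range).
rewrite rho_shiftdiag d_scale // /rho /scalem => rotated.
rewrite [expi phi ^ (n + m)]expfzDr ?expi_neq0 // -mulrA rotated mulrA.
by rewrite -expfzDr ?expi_neq0 // subrr expr0z mul1r.
Qed.

Lemma dcoef_scale (c : C) (m : int) (g : int -> C) (j : int) :
  eventually_const g -> dcoef m (fun k => c * g k) j = c * dcoef m g j.
Proof.
by move=> g_ec; rewrite /dcoef -scalem_shiftdiag d_scale //; apply: in_calA_shiftdiag.
Qed.

(* The Leibniz rule for U^m f(K) U^l g(K) = U^(m+l) h(K), read on coefficients;
   p and h are abstracted so that the product can be given in any convenient form. *)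
Lemma dcoef_mul (m l p : int) (f g h : int -> C) :
  eventually_const f -> eventually_const g ->
  p = m + l -> (forall k, h k = f (k + l) * g k) ->
  forall j, dcoef p h j = dcoef m f (j + l) * g j + f (j + (n + l)) * dcoef l g j.
Proof.
move=> f_ec g_ec -> /funext -> j.
have := d_mul (in_calA_shiftdiag m f_ec) (in_calA_shiftdiag l g_ec).
rewrite mulm_shiftdiag (d_shiftdiag m f_ec) (d_shiftdiag l g_ec) !mulm_shiftdiag.
move/(congr1 (fun M => M (j + (n + (m + l))) j)).
by rewrite /addm -(addrA n m l) (addrCA m n l) !shiftdiag_diag.
Qed.

Lemma dcoef_diag (a : int -> C) (j : int) : eventually_const a ->
  dcoef 0 a j = dcoef 0 (delta j) j * (a j - a (j + n)).
Proof.
move=> a_ec; have delta_ec := eventually_const_delta j.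
have pointwise k : a j * delta j k = a (k + 0) * delta j k.
  by rewrite /delta addr0; case: eqP => [->|]; rewrite ?mulr0.
have := @dcoef_mul 0 0 0 _ _ _ a_ec delta_ec (esym (addr0 0)) pointwise j.
rewrite dcoef_scale // !addr0 /delta eqxx mulr1 => prod.
by rewrite mulrBr mulrC prod [_ * dcoef _ _ _]mulrC addrK.
Qed.

Lemma dcoef_U_delta (j : int) : n != 0 ->
  dcoef 1 (fun=> 1) j = dcoef 0 (delta (j + 1)) (j + 1) - dcoef 0 (delta j) j.
Proof.
move=> n_neq0; have cst_ec := eventually_const_cst 1.
have U_delta := @dcoef_mul 1 0 1 _ _ (delta j) cst_ec (eventually_const_delta j)
  (esym (addr0 1)) (fun k => esym (mul1r _)) j.
have shift k : delta j k = delta (j + 1) (k + 1) * 1.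
  by rewrite mulr1 /delta (inj_eq (addIr 1)).
have delta_U := @dcoef_mul 0 1 1 _ _ _ (eventually_const_delta (j + 1)) cst_ec
  (esym (add0r 1)) shift j.
move: U_delta delta_U; rewrite addr0 /delta eqxx addrA (inj_eq (addIr 1)) mul1r mulr1.
have -> : (j + n == j) = false by apply/negbTE; rewrite -subr_eq0 addrAC subrr add0r.
by rewrite mul0r addr0 => -> <-; rewrite addrK mulr1.
Qed.

Definition beta : int -> C :=
  if n == 0 then primitive (dcoef 1 (fun=> 1)) else fun j => dcoef 0 (delta j) j.

Lemma beta_diag (a : int -> C) (j : int) : eventually_const a ->
  dcoef 0 a j = beta j * (a j - a (j + n)).
Proof.
move=> a_ec; rewrite dcoef_diag // /beta.
by case: eqVneq => [->|]; rewrite ?addr0 ?subrr ?mulr0.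
Qed.

Lemma beta_step (j : int) : dcoef 1 (fun=> 1) j = beta (j + 1) - beta j.
Proof.
rewrite /beta; case: eqVneq => [_|n_neq0]; last exact: dcoef_U_delta.
by rewrite primitiveS addrAC subrr add0r.
Qed.

Lemma dcoef_U (m j : int) : dcoef m (fun=> 1) j = beta (j + m) - beta j.
Proof.
have cst_ec := eventually_const_cst 1.
elim/int_ind_succ: m j => [j|m].
  by rewrite beta_diag // subrr mulr0 addr0 subrr.
have step j : dcoef (m + 1) (fun=> 1) j = dcoef m (fun=> 1) (j + 1) + dcoef 1 (fun=> 1) j.
  rewrite (@dcoef_mul m 1 _ _ _ _ cst_ec cst_ec erefl (fun k => esym (mulr1 1))).
  by rewrite !mulr1 mul1r.
split=> IHm j.
  by rewrite step IHm beta_step addrA subrK -addrA (addrC 1 m).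
have := step (j - 1); rewrite subrK IHm beta_step subrK => shifted.
apply: (addIr (beta j - beta (j - 1))); rewrite -shifted addrACA addNr addr0.
by rewrite addrA subrK.
Qed.

Lemma d_shiftdiag_commm (m : int) (a : int -> C) : eventually_const a ->
  d (shiftdiag m a) = commm (shiftdiag n beta) (shiftdiag m a).
Proof.
move=> a_ec; rewrite d_shiftdiag // commm_shiftdiag; congr shiftdiag.
apply/funext=> j; have cst_ec := eventually_const_cst 1.
rewrite (@dcoef_mul m 0 _ _ _ _ cst_ec a_ec (esym (addr0 m)) (fun k => esym (mul1r _))).
by rewrite dcoef_U beta_diag // !addr0 mul1r; ring.
Qed.

Lemma d_calA (M : mat) : in_calA M -> d M = commm (shiftdiag n beta) M.
Proof.
case=> s [+ ->]; elim: s => [_|[m a] s IHs /= /andP[/asboolP a_ec s_ec]].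
  have nil_calA : in_calA (polym [::]) by exists [::].
  have -> : polym [::] = scalem 0 (polym [::]).
    by apply/funext=> i; apply/funext=> j; rewrite /scalem mul0r /polym big_nil.
  rewrite d_scale //; apply/funext=> i; apply/funext=> j.
  by rewrite /commm /subm mulm_shiftdiagl mulm_shiftdiagr /scalem !mul0r mulr0 subrr.
have -> : polym ((m, a) :: s) = addm (shiftdiag m a) (polym s).
  by apply/funext=> i; apply/funext=> j; rewrite /polym big_cons.
rewrite d_add ?commm_addmr ?d_shiftdiag_commm ?IHs //; first exact: in_calA_shiftdiag.
by exists s.
Qed.

Lemma beta_conv_increments : conv_increments beta.
Proof.
rewrite /conv_increments; have cst_ec := eventually_const_cst 1.
have -> : (fun k => beta k - beta (k - 1)) = (fun k => dcoef 1 (fun=> 1) (k - 1)).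
  by apply/funext=> k; rewrite beta_step subrK.
apply/has_limits_shift/(@in_A_shiftdiag_has_limits (n + 1)).
by rewrite -d_shiftdiag //; apply/d_in_A/in_calA_shiftdiag.
Qed.

End CovariantDerivation.

Theorem mainTheorem9 (n : int) (d : mat -> mat) :
  is_derivation d -> n_covariant n d ->
  exists beta : int -> C,
    [/\ conv_increments beta,
        (forall a, in_calA a -> d a = commm (shiftdiag n beta) a) &
        (forall beta' : int -> C, conv_increments beta' ->
           (forall a, in_calA a -> d a = commm (shiftdiag n beta') a) ->
           if n != 0 then beta' = beta
           else exists c : C, forall k, beta' k = beta k + c)].
Proof.
move=> d_der d_cov; exists (beta n d); split.
- exact: beta_conv_increments.
- exact: d_calA.
- move=> beta' _ d_eq; apply: commm_shiftdiag_calA_inj => a a_calA.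
  by rewrite -d_eq // (d_calA d_der d_cov a_calA).
Qed.
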